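(* Let $s,t$ be real numbers with $t\ge s>0$, and define $K_0=1$, $K_1=t$, $K_2=t^2$, and $K_n = tK_{n-1}+s^2K_{n-2}$ for $n\ge 3$. Then $K_n \le M_n$ for every integer $n\ge 0$.
   Context: For a real number $s$, a positive integer $n$ and a set $P \subseteq \mathbb{R}$, $\mathcal{G}_s^{n\times n}(P)$ denotes the set of all $n\times n$ real upper Hessenberg matrices $A=(a_{ij})$ with $a_{i+1,i} = s$ for $1\le i\le n-1$, $a_{ij}=0$ for $i > j+1$, and $a_{ij}\in P$ for all $i \le j$. For $n\ge 1$, $M_n$ is the maximum of $|\det A|$ over $A\in\mathcal{G}_s^{n\times n}([0,t])$, and $M_0 := 1$. *)

From HB Require Import structures.
From mathcomp Require Import all_boot all_order all_algebra.
From mathcomp Require Import classical_sets reals.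
Set Implicit Arguments. Unset Strict Implicit. Unset Printing Implicit Defensive.
Import Order.TTheory GRing.Theory Num.Theory.
Local Open Scope classical_set_scope.
Local Open Scope ring_scope.

Definition hessG (R : realType) (n : nat) (s : R) (P : set R) : set 'M[R]_n :=
  [set A | forall i j : 'I_n,
     ((i : nat) = j.+1 -> A i j = s) /\
     ((j.+1 < i)%N -> A i j = 0) /\
     ((i <= j)%N -> P (A i j))].

(* M_n = max |det A| over A in G_s^{n x n}([0,t]) (taken as the supremum,
   which is attained since the set is compact and nonempty); M_0 = 1. *)
Definition Mn (R : realType) (s t : R) (n : nat) : R :=
  if n is 0 then 1
  else sup [set `|\det A| | A in @hessG R n s [set x : R | 0 <= x <= t]].

Fixpoint Kn (R : realType) (s t : R) (n : nat) {struct n} : R :=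
  match n with
  | 0 => 1
  | n0.+1 =>
    match n0 with
    | 0 => t
    | n1.+1 =>
      match n1 with
      | 0 => t ^+ 2
      | _.+1 => t * Kn s t n0 + s ^+ 2 * Kn s t n1
      end
    end
  end.

From mathcomp Require Import all_boot all_order all_algebra.
From mathcomp Require Import classical_sets reals.
From mathcomp Require Import fingroup perm.
Import Order.TTheory GRing.Theory Num.Theory.
Local Open Scope ring_scope.
Set Implicit Arguments. Unset Strict Implicit.

(* The Hessenberg matrix with entry t at the positions (i, j), i <= j, with
   j - i even, and 0 at the other positions on or above the diagonal, lies in
   G_s([0,t]). Expanding its determinant along the first column gives
   det T_(n+3) = t det T_(n+2) + s^2 det T_(n+1), the recurrence of K_n, so
   K_n = |det T_n| <= M_n; the supremum is a genuine bound because every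
   matrix in G_s([0,t]) has entries of modulus at most t. *)

Section NormDet.
Variable R : numDomainType.

Lemma norm_det_le n (A : 'M[R]_n) (c : R) :
  (forall i j, `|A i j| <= c) -> `|\det A| <= n`!%:R * c ^+ n.
Proof.
move=> Ac; rewrite /determinant (le_trans (ler_norm_sum _ _ _)) //.
rewrite mulr_natl -card_Sn -sumr_const; apply: ler_sum => p _.
rewrite normrM normrX normrN normr1 expr1n mul1r normr_prod.
have -> : c ^+ n = \prod_(i < n) c by rewrite prodr_const card_ord.
by apply: ler_prod => i _; rewrite normr_ge0 Ac.
Qed.

End NormDet.

Section CheckerboardHessenberg.
Variables (R : comPzRingType) (s t : R).

Definition Kcoef (i j : nat) : R :=
  if (i <= j)%N then (if odd (j - i) then 0 else t)
  else if i == j.+1 then s else 0.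

Definition Kmx n : 'M[R]_n := \matrix_(i, j) Kcoef i j.

Lemma KcoefSS i j : Kcoef i.+1 j.+1 = Kcoef i j.
Proof. by rewrite /Kcoef ltnS subSS eqSS. Qed.

Lemma Kcoef0SS j : Kcoef 0 j.+2 = Kcoef 0 j.
Proof. by rewrite /Kcoef !subn0 /= negbK. Qed.

Lemma Kmx_minor00 n : row' ord0 (col' ord0 (Kmx n.+1)) = Kmx n.
Proof. by apply/matrixP => i j; rewrite !mxE /= KcoefSS. Qed.

Lemma det_Kmx_expand n : \det (Kmx n.+2) =
  t * \det (Kmx n.+1) - s * \det (row' (lift ord0 ord0) (col' ord0 (Kmx n.+2))).
Proof.
rewrite [LHS](expand_det_col _ ord0) !big_ord_recl big1 ?addr0; last first.
  by move=> i _; rewrite !mxE /Kcoef /= mul0r.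
by rewrite /cofactor Kmx_minor00 !mxE /Kcoef /= expr0 mul1r expr1 mulN1r mulrN.
Qed.

Lemma det_Kmx_minor10 n :
  \det (row' (lift ord0 ord0) (col' ord0 (Kmx n.+3))) = - s * \det (Kmx n.+1).
Proof.
rewrite [LHS](expand_det_col _ ord0) !big_ord_recl big1 ?addr0; last first.
  by move=> i _; rewrite !mxE /Kcoef /= mul0r.
rewrite !mxE /Kcoef /= mul0r add0r /cofactor /= expr1 mulN1r mulrN -mulNr.
congr (_ * \det _); apply/matrixP => i j; rewrite !mxE /=.
case: i => [[|i] ?] /=; first by rewrite Kcoef0SS.
by rewrite /bump /= !add1n !KcoefSS.
Qed.

Lemma det_Kmx_rec n :
  \det (Kmx n.+3) = t * \det (Kmx n.+2) + s ^+ 2 * \det (Kmx n.+1).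
Proof. by rewrite det_Kmx_expand det_Kmx_minor10 mulNr mulrN opprK mulrA. Qed.

Lemma det_Kmx1 : \det (Kmx 1) = t.
Proof. by rewrite det_mx11 mxE. Qed.

Lemma det_Kmx2 : \det (Kmx 2) = t ^+ 2.
Proof.
rewrite det_Kmx_expand det_Kmx1 det_mx11 !mxE /Kcoef /=.
by rewrite mulr0 subr0 expr2.
Qed.

End CheckerboardHessenberg.

Lemma KnSSS (R : realType) (s t : R) n :
  Kn s t n.+3 = t * Kn s t n.+2 + s ^+ 2 * Kn s t n.+1.
Proof. by []. Qed.

Lemma det_Kmx (R : realType) (s t : R) n : \det (Kmx s t n) = Kn s t n.
Proof.
suff: \det (Kmx s t n) = Kn s t n /\ \det (Kmx s t n.+1) = Kn s t n.+1 by case.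
elim: n => [|[|n] [IHn IHn1]]; first by rewrite det_mx00 det_Kmx1.
  by rewrite det_Kmx1 det_Kmx2.
by split=> //; rewrite det_Kmx_rec KnSSS IHn IHn1.
Qed.

Lemma Kn_ge0 (R : realType) (s t : R) n : 0 <= t -> 0 <= Kn s t n.
Proof.
move=> t_ge0; suff: 0 <= Kn s t n /\ 0 <= Kn s t n.+1 by case.
elim: n => [|[|n] [IHn IHn1]]; first by split.
  by split=> //; rewrite exprn_ge0.
by split=> //; rewrite KnSSS addr_ge0 // mulr_ge0 // sqr_ge0.
Qed.

Lemma Kmx_in_hessG (R : realType) (s t : R) n : 0 <= t ->
  hessG s [set x : R | 0 <= x <= t] (Kmx s t n).
Proof.
move=> t_ge0 i j; rewrite !mxE /Kcoef; split; [|split].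
- by move=> ->; rewrite ltnn eqxx.
- by move=> ltji; rewrite leqNgt (ltnW ltji) /= gtn_eqF.
- by move=> ->; case: odd; rewrite /= ?lexx ?t_ge0.
Qed.

Lemma hessG_norm_le (R : realType) (s t : R) n (A : 'M[R]_n) :
  0 < s -> s <= t -> hessG s [set x : R | 0 <= x <= t] A ->
  forall i j, `|A i j| <= t.
Proof.
move=> s_gt0 le_st HA i j; have [Asub [Alow Aup]] := HA i j.
have t_ge0 : 0 <= t by rewrite (le_trans (ltW s_gt0)).
case: (leqP i j) => [/Aup/andP[A_ge0 A_le] | ltji]; first by rewrite ger0_norm.
case: (ltngtP i j.+1) => [| /Alow -> | /Asub ->]; first by rewrite ltnS leqNgt ltji.
- by rewrite normr0.
- by rewrite gtr0_norm.
Qed.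

Theorem lemma3p6 (R : realType) (s t : R) :
  0 < s -> s <= t -> forall n : nat, Kn s t n <= Mn s t n.
Proof.
move=> s_gt0 le_st [|n]; first exact: lexx.
have t_ge0 : 0 <= t by rewrite (le_trans (ltW s_gt0)).
have <- : `|\det (Kmx s t n.+1)| = Kn s t n.+1.
  by rewrite det_Kmx ger0_norm ?Kn_ge0.
apply: ub_le_sup; last by exists (Kmx s t n.+1); first exact: Kmx_in_hessG.
exists (n.+1`!%:R * t ^+ n.+1) => _ [A HA <-].
exact/norm_det_le/(hessG_norm_le s_gt0 le_st HA).
Qed.
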